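(* Let $R$ be a unital ring and let $S\subseteq R$ be a subset with $0,1\in S$ such that $S$ is an inverse monoid under the multiplication of $R$. Then there is a subset $T$ with $S\subseteq T\subseteq R$ such that $T$, under the multiplication of $R$, is a Boolean inverse monoid.
   Context: An inverse monoid is a monoid in which each $s$ has a unique $s^{-1}$ with $s=ss^{-1}s$, $s^{-1}=s^{-1}ss^{-1}$; natural partial order $s\le t$ iff $s=ts^{-1}s$; $a,b$ compatible if $a^{-1}b,ab^{-1}$ are idempotents. A Boolean inverse monoid is an inverse monoid with zero in which every finite compatible subset has a join with respect to $\le$, multiplication distributes over such joins, and the idempotents form a Boolean algebra. *)

From HB Require Import structures.
From mathcomp Require Import all_boot all_algebra.
Set Implicit Arguments. Unset Strict Implicit. Unset Printing Implicit Defensive.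
Import GRing.Theory.
Local Open Scope ring_scope.

Section InverseMonoids.
Variable R : pzRingType.
Implicit Types (T : R -> Prop) (s t x y e : R).

Definition is_inv T s s' := T s' /\ s = s * s' * s /\ s' = s' * s * s'.

Definition inverse_monoid T :=
  T 1 /\ (forall x y, T x -> T y -> T (x * y)) /\
  (forall s, T s -> exists! s', is_inv T s s').

Definition natle T s t := T s /\ T t /\ exists s', is_inv T s s' /\ s = t * s' * s.

Definition idem T e := T e /\ e * e = e.

Definition compatible T a b :=
  exists a' b', is_inv T a a' /\ is_inv T b b' /\ idem T (a' * b) /\ idem T (a * b').

Definition is_lub_in T (C P : R -> Prop) j :=
  C j /\ (forall x, P x -> natle T x j) /\
  (forall u, C u -> (forall x, P x -> natle T x u) -> natle T j u).

Definition is_glb_in T (C P : R -> Prop) m :=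
  C m /\ (forall x, P x -> natle T m x) /\
  (forall u, C u -> (forall x, P x -> natle T u x) -> natle T u m).

Definition has_zero T := exists z, T z /\ forall x, T x -> z * x = z /\ x * z = z.

Definition finite_compatible T (A : seq R) :=
  (forall x, x \in A -> T x) /\ (forall a b, a \in A -> b \in A -> compatible T a b).

Definition has_compatible_joins T :=
  forall A : seq R, finite_compatible T A -> exists j, is_lub_in T T (fun x => x \in A) j.

Definition mul_distributes_joins T :=
  forall (A : seq R) j c, finite_compatible T A -> is_lub_in T T (fun x => x \in A) j ->
    T c ->
    is_lub_in T T (fun y => exists2 x, x \in A & y = c * x) (c * j) /\
    is_lub_in T T (fun y => exists2 x, x \in A & y = x * c) (j * c).

Definition idempotents_boolean T :=
  exists (meet join : R -> R -> R) (compl : R -> R) (bot top : R),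
    let E := idem T in
    E bot /\ E top /\
    (forall e, E e -> natle T bot e /\ natle T e top) /\
    (forall e f, E e -> E f ->
       is_glb_in T E (fun x => x = e \/ x = f) (meet e f) /\
       is_lub_in T E (fun x => x = e \/ x = f) (join e f)) /\
    (forall e f g, E e -> E f -> E g ->
       meet e (join f g) = join (meet e f) (meet e g)) /\
    (forall e, E e -> E (compl e) /\ meet e (compl e) = bot /\ join e (compl e) = top).

Definition boolean_inverse_monoid T :=
  inverse_monoid T /\ has_zero T /\ has_compatible_joins T /\
  mul_distributes_joins T /\ idempotents_boolean T.

End InverseMonoids.

(* Idempotents of an inverse monoid commute, so inside R they generate, under
   products and complements [e |-> 1 - e], a Boolean algebra B of commuting
   idempotents. Let T be the set of x admitting some y with xyx = x, yxy = y
   such that conjugation by x and by y maps B into B. Then T contains S and is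
   an inverse monoid whose idempotents are exactly B, and x <= u holds in T iff
   x = u f for some f in B. Compatible a, w have the join a + w (1 - a^-1 a),
   a sum of two elements with orthogonal domains and ranges; these explicit
   ring formulas give the joins, their distributivity, and the Boolean
   operations e f, e + f - e f, 1 - e on B. *)

From mathcomp Require Import all_boot all_algebra.
From Stdlib Require Import ClassicalEpsilon.
Set Implicit Arguments. Unset Strict Implicit. Unset Printing Implicit Defensive.
Import GRing.Theory.
Local Open Scope ring_scope.

Section RingIdempotents.
Variable R : pzRingType.
Implicit Types a e f : R.

Lemma mulr_idemK a e : e * e = e -> a * e * e = a * e.
Proof. by move=> ee; rewrite -mulrA ee. Qed.

Lemma idem_mulr_compl e : e * e = e -> e * (1 - e) = 0.
Proof. by move=> ee; rewrite mulrBr mulr1 ee subrr. Qed.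

Lemma idem_mull_compl e : e * e = e -> (1 - e) * e = 0.
Proof. by move=> ee; rewrite mulrBl mul1r ee subrr. Qed.

Lemma compl_mul_compl e f : 1 - (1 - e) * (1 - f) = e + f - e * f.
Proof. by rewrite mulrBl mul1r mulrBr mulr1 !opprB addrCA subrKC addrAC. Qed.

End RingIdempotents.

Section InverseMonoid.
Variables (R : pzRingType) (S : R -> Prop).
Hypothesis S_invmon : inverse_monoid S.

Lemma invmon1 : S 1. Proof. by case: S_invmon. Qed.

Lemma invmonM x y : S x -> S y -> S (x * y).
Proof. by case: S_invmon => _ [+ _]; apply. Qed.

Lemma invmon_inv s : S s -> exists s', is_inv S s s'.
Proof. by case: S_invmon => _ [_ /[apply]] [s' [? _]]; exists s'. Qed.

Lemma invmon_inv_uniq s a b : S s -> is_inv S s a -> is_inv S s b -> a = b.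
Proof.
by case: S_invmon => _ [_ /[apply]] [s' [_ uniq_s']] /uniq_s' <- /uniq_s' <-.
Qed.

Lemma is_inv_sym s s' : S s -> is_inv S s s' -> is_inv S s' s.
Proof. by move=> Ss [Ss' [ss's s'ss']]. Qed.

Lemma idem_is_inv e : S e -> e * e = e -> is_inv S e e.
Proof. by move=> Se ee; rewrite /is_inv !ee. Qed.

Lemma invmon_idemM e f : S e -> S f -> e * e = e -> f * f = f ->
  (e * f) * (e * f) = e * f.
Proof.
move=> Se Sf ee ff; have Sef := invmonM Se Sf.
have [x [Sx [efxef xefx]]] := invmon_inv Sef.
have fxe_inv : is_inv S (e * f) (f * x * e).
  split; first by apply: invmonM => //; apply: invmonM.
  rewrite !mulrA !(mulr_idemK _ ee, mulr_idemK _ ff).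
  by split; [rewrite {1}efxef | rewrite {1}xefx]; rewrite !mulrA.
have x_fxe : x = f * x * e by apply: (invmon_inv_uniq Sef).
have xe : x * e = x by rewrite x_fxe -!mulrA ee.
have fx : f * x = x by rewrite x_fxe !mulrA ff.
have xx : x * x = x by rewrite -{1}xe -{2}fx (mulrA _ f) -(mulrA x e f) -xefx.
have <- : x = e * f.
  by apply: (invmon_inv_uniq Sx (idem_is_inv Sx xx)); apply: is_inv_sym.
exact: xx.
Qed.

Lemma invmon_idemC e f : S e -> S f -> e * e = e -> f * f = f -> e * f = f * e.
Proof.
move=> Se Sf ee ff; have Sef := invmonM Se Sf.
have efef := invmon_idemM Se Sf ee ff; have fefe := invmon_idemM Sf Se ff ee.
apply: (invmon_inv_uniq Sef (idem_is_inv Sef efef)).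
split; first exact: invmonM.
rewrite !mulrA !(mulr_idemK _ ee, mulr_idemK _ ff).
by split; [rewrite -{1}efef | rewrite -{1}fefe]; rewrite !mulrA.
Qed.

End InverseMonoid.

Section BooleanCompletion.
Variables (R : pzRingType) (S : R -> Prop).
Hypothesis S_invmon : inverse_monoid S.

Inductive boolean_hull : R -> Prop :=
| hull_of_idem e : S e -> e * e = e -> boolean_hull e
| hullM x y : boolean_hull x -> boolean_hull y -> boolean_hull (x * y)
| hull_compl x : boolean_hull x -> boolean_hull (1 - x).

Local Notation B := boolean_hull.

Lemma hullC_idem x e : B x -> S e -> e * e = e -> x * e = e * x.
Proof.
move=> Bx Se ee; elim: Bx => {x} [x Sx xx | x y _ xe _ ye | x _ xe].
- exact: (invmon_idemC S_invmon).
- by rewrite -mulrA ye mulrA xe mulrA.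
- by rewrite mulrBl mulrBr mul1r mulr1 xe.
Qed.

Lemma hullC x y : B x -> B y -> x * y = y * x.
Proof.
move=> Bx By; elim: By => {y} [y Sy yy | y z _ xy _ xz | y _ xy].
- exact: hullC_idem.
- by rewrite mulrA xy -mulrA xz mulrA.
- by rewrite mulrBl mulrBr mul1r mulr1 xy.
Qed.

Lemma hull_idem x : B x -> x * x = x.
Proof.
elim=> {x} [x _ xx | x y Bx xx By yy | x _ xx] //.
- by rewrite -mulrA (mulrA y) (hullC By Bx) -mulrA yy mulrA xx.
- by rewrite mulrBr mulr1 idem_mull_compl // subr0.
Qed.

Lemma hull1 : B 1.
Proof. by apply: hull_of_idem; [exact: (invmon1 S_invmon) | rewrite mulr1]. Qed.

Lemma hull0 : B 0.
Proof. by rewrite -(subrr 1); apply/hull_compl/hull1. Qed.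

Lemma hull_join x y : B x -> B y -> B (x + y - x * y).
Proof.
by move=> Bx By; rewrite -compl_mul_compl; apply/hull_compl/hullM; apply: hull_compl.
Qed.

Lemma hull_add_orth x y : B x -> B y -> x * y = 0 -> B (x + y).
Proof. by move=> Bx By xy; have := hull_join Bx By; rewrite xy subr0. Qed.

Lemma hull_conj s s' b : S s -> is_inv S s s' -> B b -> B (s * b * s').
Proof.
move=> Ss [Ss' [ss's s'ss']] Bb.
have s's_idem : (s' * s) * (s' * s) = s' * s by rewrite mulrA -s'ss'.
have ss'_idem : (s * s') * (s * s') = s * s' by rewrite mulrA -ss's.
have Ss's := invmonM S_invmon Ss' Ss.
elim: Bb => {b} [e Se ee | x y Bx Bsxs' _ Bsys' | x _ Bsxs'].
- apply: hull_of_idem; first by do 2?apply: (invmonM S_invmon).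
  rewrite !mulrA -(mulrA _ s' s) -(mulrA s e).
  by rewrite (invmon_idemC S_invmon Se Ss's ee s's_idem) !mulrA -ss's mulr_idemK.
- have -> : s * (x * y) * s' = (s * x * s') * (s * y * s').
    rewrite !mulrA -(mulrA _ s' s) -(mulrA s x (s' * s)).
    by rewrite (hullC_idem Bx Ss's s's_idem) !mulrA -ss's.
  exact: hullM.
- have -> : s * (1 - x) * s' = (s * s') * (1 - s * x * s').
    by rewrite mulrBr mulr1 mulrBl mulrBr mulr1 !mulrA -ss's.
  apply: hullM; last exact: hull_compl.
  by apply: hull_of_idem; first exact: invmonM.
Qed.

Lemma hull_add_disjoint g h e : B g -> B h -> B e -> g * e = g -> B (g + h * (1 - e)).
Proof.
move=> Bg Bh Be ge; apply: hull_add_orth => //; first by apply: hullM => //; apply: hull_compl.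
by rewrite mulrA (hullC Bg Bh) -mulrA -{1}ge -mulrA idem_mulr_compl ?hull_idem // !mulr0.
Qed.

Definition hull_inverse x y := [/\ x * y * x = x, y * x * y = y,
  forall b, B b -> B (x * b * y) & forall b, B b -> B (y * b * x)].

Definition completion x := exists y, hull_inverse x y.

Local Notation T := completion.

Lemma hull_inverse_sym x y : hull_inverse x y -> hull_inverse y x.
Proof. by case. Qed.

Lemma hull_inverse_ran x y : hull_inverse x y -> B (x * y).
Proof. by case=> _ _ conj_xy _; rewrite -(mulr1 x); apply/conj_xy/hull1. Qed.

Lemma hull_inverse_dom x y : hull_inverse x y -> B (y * x).
Proof. by move/hull_inverse_sym/hull_inverse_ran. Qed.

Lemma hull_inverseM x x' y y' : hull_inverse x x' -> hull_inverse y y' ->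
  hull_inverse (x * y) (y' * x').
Proof.
move=> Ix Iy; have C := hullC (hull_inverse_ran Iy) (hull_inverse_dom Ix).
case: Ix => xx'x x'xx' conj_x conjV_x; case: Iy => yy'y y'yy' conj_y conjV_y.
split=> [||b Bb|b Bb].
- rewrite (_ : _ * _ = x * ((y * y') * (x' * x)) * y); last by rewrite !mulrA.
  by rewrite C !mulrA xx'x -(mulrA x y y') -(mulrA x) yy'y.
- rewrite (_ : _ * _ = y' * ((x' * x) * (y * y')) * x'); last by rewrite !mulrA.
  by rewrite -C !mulrA y'yy' -(mulrA y' x' x) -(mulrA y') x'xx'.
- rewrite (_ : _ * _ = x * (y * b * y') * x'); last by rewrite !mulrA.
  exact/conj_x/conj_y.
- rewrite (_ : _ * _ = y' * (x' * b * x) * y); last by rewrite !mulrA.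
  exact/conjV_y/conjV_x.
Qed.

Lemma hull_inverse_hull b : B b -> hull_inverse b b.
Proof.
move=> Bb; have bb := hull_idem Bb.
by split=> [||c Bc|c Bc]; rewrite ?bb //; do 2?apply: hullM.
Qed.

Lemma hull_inverse_invmon s s' : S s -> is_inv S s s' -> hull_inverse s s'.
Proof.
move=> Ss Is; have Is' := is_inv_sym Ss Is; have [Ss' [ss's s'ss']] := Is.
by split=> [||b|b]; [rewrite -ss's | rewrite -s'ss' | exact: hull_conj | exact: hull_conj].
Qed.

Lemma completionM x y : T x -> T y -> T (x * y).
Proof. by move=> [x' Ix] [y' Iy]; exists (y' * x'); apply: hull_inverseM. Qed.

Lemma completion_hull b : B b -> T b.
Proof. by exists b; apply: hull_inverse_hull. Qed.

Lemma completion_invmon s : S s -> T s.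
Proof.
by move=> Ss; have [s' Is] := invmon_inv S_invmon Ss; exists s'; apply: hull_inverse_invmon.
Qed.

(* Unspecified when [x] is not in [T]. *)
Definition pinv x := epsilon (inhabits 0) (hull_inverse x).

Lemma pinvP x : T x -> hull_inverse x (pinv x).
Proof. exact: epsilon_spec. Qed.

Lemma completion_pinv x : T x -> T (pinv x).
Proof. by move/pinvP/hull_inverse_sym; exists x. Qed.

Lemma completion_idem_hull y : T y -> y * y = y -> B y.
Proof.
move=> Ty yy; have Iy := pinvP Ty; set y' := pinv y in Iy *.
have C := hullC (hull_inverse_ran Iy) (hull_inverse_dom Iy).
case: Iy => yy'y y'yy' _ _.
have yf : y * (y' * y) = y by rewrite mulrA.
have fr : (y' * y) * (y * y') = y' by rewrite mulrA -(mulrA y') yy.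
have yr : y * (y * y') = y * y' by rewrite mulrA yy.
have rf : (y * y') * (y' * y) = y * y' by rewrite -{1}yr -mulrA C mulrA yf yr.
have y'_ran : y' = y * y' by rewrite -{1}fr -C rf.
have -> : y = y' * y by rewrite y'_ran yy'y.
exact: hull_inverse_dom (pinvP Ty).
Qed.

Lemma hull_inverse_uniq x x' y : hull_inverse x x' -> T y ->
  x * y * x = x -> y * x * y = y -> y = x'.
Proof.
move=> Ix Ty xyx yxy; have Tx : T x by exists x'.
have Bxy : B (x * y) by apply: completion_idem_hull; [apply: completionM | rewrite mulrA xyx].
have Byx : B (y * x) by apply: completion_idem_hull; [apply: completionM | rewrite mulrA yxy].
have Bdx := hull_inverse_dom Ix; have Brx := hull_inverse_ran Ix.
case: Ix => xx'x x'xx' _ _.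
have -> : y = x' * x * y.
  transitivity ((y * x) * (x' * x) * y).
    by rewrite -(mulrA y x) (mulrA x x') xx'x yxy.
  by rewrite (hullC Byx Bdx) -mulrA yxy.
transitivity (x' * ((x * y) * (x * x'))).
  by rewrite (hullC Bxy Brx) !mulrA x'xx'.
by rewrite (mulrA (x * y)) xyx mulrA x'xx'.
Qed.

Lemma pinv_uniq x y : T x -> T y -> x * y * x = x -> y * x * y = y -> pinv x = y.
Proof. by move=> /pinvP Ix Ty xyx yxy; rewrite (hull_inverse_uniq Ix Ty xyx yxy). Qed.

Lemma pinvM x y : T x -> T y -> pinv (x * y) = pinv y * pinv x.
Proof.
move=> Tx Ty; have [xy_inv xy_invV _ _] := hull_inverseM (pinvP Tx) (pinvP Ty).
by apply: pinv_uniq => //; [apply: completionM | apply: completionM; apply: completion_pinv].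
Qed.

Lemma pinv_hull b : B b -> pinv b = b.
Proof.
move=> Bb; have [bbb _ _ _] := hull_inverse_hull Bb.
by apply: pinv_uniq => //; apply: completion_hull.
Qed.

Lemma pinvK x : T x -> pinv (pinv x) = x.
Proof.
move=> Tx; have [xx'x x'xx' _ _] := pinvP Tx.
by apply: pinv_uniq => //; apply: completion_pinv.
Qed.

Lemma is_inv_completionE x x' : T x -> is_inv T x x' -> x' = pinv x.
Proof. by move=> Tx [Tx' [xx'x x'xx']]; rewrite (pinv_uniq Tx Tx'). Qed.

Lemma is_inv_pinv x : T x -> is_inv T x (pinv x).
Proof. by move=> Tx; have [] := pinvP Tx; split; [exact: completion_pinv | split]. Qed.

Lemma completion_inverse_monoid : inverse_monoid T.
Proof.
split; first exact: completion_hull hull1.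
split; first exact: completionM.
move=> x Tx; exists (pinv x); split; first exact: is_inv_pinv.
by move=> x' /(is_inv_completionE Tx).
Qed.

Lemma completion_has_zero : has_zero T.
Proof. by exists 0; split=> [|x _]; [apply: completion_hull hull0 | rewrite mul0r mulr0]. Qed.

Definition dom x := pinv x * x.
Definition ran x := x * pinv x.

Lemma hull_dom x : T x -> B (dom x). Proof. by move/pinvP/hull_inverse_dom. Qed.
Lemma hull_ran x : T x -> B (ran x). Proof. by move/pinvP/hull_inverse_ran. Qed.
Lemma mul_dom x : T x -> x * dom x = x. Proof. by case/pinvP; rewrite /dom mulrA. Qed.
Lemma ran_mul x : T x -> ran x * x = x. Proof. by case/pinvP. Qed.
Lemma pinv_ran x : T x -> pinv x * ran x = pinv x.
Proof. by case/pinvP=> _; rewrite /ran mulrA. Qed.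
Lemma dom_pinv x : T x -> dom x * pinv x = pinv x. Proof. by case/pinvP. Qed.

Lemma hull_conjT x b : T x -> B b -> B (x * b * pinv x).
Proof. by case/pinvP=> _ _ + _; apply. Qed.

Lemma hull_conjVT x b : T x -> B b -> B (pinv x * b * x).
Proof. by case/pinvP=> _ _ _; apply. Qed.

Lemma mulr_hull_shift x e : T x -> B e -> x * e = (x * e * pinv x) * x.
Proof.
by move=> Tx Be; rewrite -mulrA -/(dom x) -mulrA (hullC Be (hull_dom Tx)) mulrA mul_dom.
Qed.

Lemma mull_hull_shift x e : T x -> B e -> e * x = x * (pinv x * e * x).
Proof.
by move=> Tx Be; rewrite !mulrA -/(ran x) (hullC (hull_ran Tx) Be) -mulrA ran_mul.
Qed.

Lemma dom_mulr_hull u f : T u -> B f -> dom (u * f) = dom u * f.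
Proof.
move=> Tu Bf; rewrite /dom pinvM ?(pinv_hull Bf) //; last exact: completion_hull.
by rewrite -!mulrA (mulrA (pinv u)) -/(dom u) (hullC (hull_dom Tu) Bf) mulrA (hull_idem Bf).
Qed.

Lemma natle_dom x u : natle T x u -> x = u * dom x.
Proof.
by case=> Tx [_ [x' [Ix {1}->]]]; rewrite (is_inv_completionE Tx Ix) -mulrA.
Qed.

Lemma natle_hull x u f : T u -> B f -> x = u * f -> natle T x u.
Proof.
move=> Tu Bf ->; have Tuf : T (u * f) by apply/completionM/completion_hull.
split=> //; split=> //; exists (pinv (u * f)); split; first exact: is_inv_pinv.
by rewrite -mulrA -/(dom _) dom_mulr_hull // mulrA mul_dom.
Qed.

Lemma natle_trans x y z : natle T x y -> natle T y z -> natle T x z.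
Proof.
move=> le_xy le_yz; have [Tx _] := le_xy; have [Ty [Tz _]] := le_yz.
apply: (natle_hull (f := dom y * dom x)) => //; first by apply: hullM; apply: hull_dom.
by rewrite mulrA -(natle_dom le_yz) -(natle_dom le_xy).
Qed.

Lemma natle_anti x y : natle T x y -> natle T y x -> x = y.
Proof.
move=> le_xy le_yx; have [Tx [Ty _]] := le_xy.
have dx_le : dom x = dom y * dom x.
  by rewrite {1}(natle_dom le_xy) (dom_mulr_hull Ty (hull_dom Tx)).
have dy_le : dom y = dom x * dom y.
  by rewrite {1}(natle_dom le_yx) (dom_mulr_hull Tx (hull_dom Ty)).
have dxy : dom x = dom y by rewrite dx_le -(hullC (hull_dom Tx) (hull_dom Ty)) -dy_le.
by rewrite (natle_dom le_xy) dxy mul_dom.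
Qed.

Lemma natle_mul2l c x j : T c -> natle T x j -> natle T (c * x) (c * j).
Proof.
move=> Tc le_xj; have [Tx [Tj _]] := le_xj.
apply: (natle_hull (f := dom x)); [exact: completionM | exact: hull_dom |].
by rewrite -mulrA -(natle_dom le_xj).
Qed.

Lemma natle_mul2r c x j : T c -> natle T x j -> natle T (x * c) (j * c).
Proof.
move=> Tc le_xj; have [Tx [Tj _]] := le_xj.
apply: (natle_hull (f := pinv c * dom x * c)); first exact: completionM.
  exact/hull_conjVT/hull_dom.
by rewrite {1}(natle_dom le_xj) -mulrA (mull_hull_shift Tc (hull_dom Tx)) mulrA.
Qed.

Lemma natle0 u : T u -> natle T 0 u.
Proof. by move=> Tu; apply: (natle_hull (f := 0)) => //; [exact: hull0 | rewrite mulr0]. Qed.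

Definition agree a c := a * dom c = c * dom a /\ ran c * a = ran a * c.

Lemma pinv_mul_hullC a c : T a -> T c -> B (pinv a * c) -> pinv a * c = pinv c * a.
Proof.
move=> Ta Tc Bac.
by rewrite -{1}(pinv_hull Bac) pinvM ?pinvK //; apply: completion_pinv.
Qed.

Lemma mul_pinv_hullC a c : T a -> T c -> B (a * pinv c) -> a * pinv c = c * pinv a.
Proof.
move=> Ta Tc; have := pinv_mul_hullC (completion_pinv Ta) (completion_pinv Tc).
by rewrite (pinvK Ta) (pinvK Tc).
Qed.

Lemma agree_half a c : T a -> T c -> B (pinv a * c) -> B (a * pinv c) ->
  a * dom c = ran c * a /\ ran a * c = ran c * a.
Proof.
move=> Ta Tc Bac Bac'.
have Eac := pinv_mul_hullC Ta Tc Bac; have Eac' := mul_pinv_hullC Ta Tc Bac'.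
split; first by rewrite /dom mulrA Eac' -mulrA Eac mulrA.
rewrite /ran -mulrA -(hull_idem Bac) {2}Eac !mulrA -/(ran a).
by rewrite -(mulrA _ c) -/(ran c) (hullC (hull_ran Ta) (hull_ran Tc)) -mulrA ran_mul.
Qed.

Lemma compatible_agree a c : T a -> T c -> compatible T a c -> agree a c.
Proof.
move=> Ta Tc [a' [c' [Ia [Ic [[_ a'c_idem] [_ ac'_idem]]]]]].
rewrite (is_inv_completionE Ta Ia) (is_inv_completionE Tc Ic) in a'c_idem ac'_idem.
have Bac := completion_idem_hull (completionM (completion_pinv Ta) Tc) a'c_idem.
have Bac' := completion_idem_hull (completionM Ta (completion_pinv Tc)) ac'_idem.
have Bca : B (pinv c * a) by rewrite -(pinv_mul_hullC Ta Tc Bac).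
have Bca' : B (c * pinv a) by rewrite -(mul_pinv_hullC Ta Tc Bac').
have [a_dc ra_c] := agree_half Ta Tc Bac Bac'.
have [c_da rc_a] := agree_half Tc Ta Bca Bca'.
by split; [rewrite a_dc -ra_c c_da | rewrite ra_c].
Qed.

Lemma mul_hull_pinv0 x y b : T x -> T y -> dom x * dom y = 0 -> B b -> x * b * pinv y = 0.
Proof.
move=> Tx Ty dxy Bb; rewrite -(mul_dom Tx) -(dom_pinv Ty) -(mulrA x).
by rewrite (hullC (hull_dom Tx) Bb) (mulrA x b) mulrA -(mulrA (x * b)) dxy mulr0 mul0r.
Qed.

Lemma pinv_mul_hull0 x y b : T x -> T y -> ran x * ran y = 0 -> B b -> pinv x * b * y = 0.
Proof.
move=> Tx Ty; have := mul_hull_pinv0 (b := b) (completion_pinv Tx) (completion_pinv Ty).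
by rewrite /dom (pinvK Tx) (pinvK Ty).
Qed.

Lemma orth_cross0 x y : T x -> T y -> dom x * dom y = 0 -> ran x * ran y = 0 ->
  [/\ x * pinv y = 0, y * pinv x = 0, pinv x * y = 0 & pinv y * x = 0].
Proof.
move=> Tx Ty dxy rxy.
have dyx : dom y * dom x = 0 by rewrite (hullC (hull_dom Ty) (hull_dom Tx)).
have ryx : ran y * ran x = 0 by rewrite (hullC (hull_ran Ty) (hull_ran Tx)).
have := mul_hull_pinv0 Tx Ty dxy hull1; have := mul_hull_pinv0 Ty Tx dyx hull1.
have := pinv_mul_hull0 Tx Ty rxy hull1; have := pinv_mul_hull0 Ty Tx ryx hull1.
by rewrite !mulr1.
Qed.

Lemma hull_inverse_add x y : T x -> T y -> dom x * dom y = 0 -> ran x * ran y = 0 ->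
  hull_inverse (x + y) (pinv x + pinv y).
Proof.
move=> Tx Ty dxy rxy; have [xy'0 yx'0 x'y0 y'x0] := orth_cross0 Tx Ty dxy rxy.
have dyx : dom y * dom x = 0 by rewrite (hullC (hull_dom Ty) (hull_dom Tx)).
have ryx : ran y * ran x = 0 by rewrite (hullC (hull_ran Ty) (hull_ran Tx)).
have conj_add b : B b -> (x + y) * b * (pinv x + pinv y) = x * b * pinv x + y * b * pinv y.
  move=> Bb; rewrite mulrDr !mulrDl (mul_hull_pinv0 Tx Ty dxy Bb).
  by rewrite (mul_hull_pinv0 Ty Tx dyx Bb) addr0 add0r.
have conjV_add b : B b -> (pinv x + pinv y) * b * (x + y) = pinv x * b * x + pinv y * b * y.
  move=> Bb; rewrite mulrDr !mulrDl (pinv_mul_hull0 Tx Ty rxy Bb).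
  by rewrite (pinv_mul_hull0 Ty Tx ryx Bb) addr0 add0r.
have [xx'x x'xx' conj_x conjV_x] := pinvP Tx.
have [yy'y y'yy' conj_y conjV_y] := pinvP Ty.
split=> [||b Bb|b Bb].
- have := conj_add 1 hull1; rewrite !mulr1 => ->.
  rewrite mulrDl !mulrDr -(mulrA x (pinv x) y) -(mulrA y (pinv y) x).
  by rewrite x'y0 y'x0 !mulr0 addr0 add0r xx'x yy'y.
- have := conjV_add 1 hull1; rewrite !mulr1 => ->.
  rewrite mulrDl !mulrDr -(mulrA (pinv x) x (pinv y)) -(mulrA (pinv y) y (pinv x)).
  by rewrite xy'0 yx'0 !mulr0 addr0 add0r x'xx' y'yy'.
- rewrite conj_add //; apply: hull_add_orth; [exact: conj_x | exact: conj_y |].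
  by rewrite !mulrA -(mulrA _ (pinv x) y) x'y0 mulr0 !mul0r.
- rewrite conjV_add //; apply: hull_add_orth; [exact: conjV_x | exact: conjV_y |].
  by rewrite !mulrA -(mulrA _ x (pinv y)) xy'0 mulr0 !mul0r.
Qed.

Lemma completion_add_orth x y : T x -> T y -> dom x * dom y = 0 -> ran x * ran y = 0 ->
  [/\ T (x + y), dom (x + y) = dom x + dom y & ran (x + y) = ran x + ran y].
Proof.
move=> Tx Ty dxy rxy; have Ixy := hull_inverse_add Tx Ty dxy rxy.
have [xy'0 yx'0 x'y0 y'x0] := orth_cross0 Tx Ty dxy rxy.
have Txy : T (x + y) by exists (pinv x + pinv y).
have pinv_xy : pinv (x + y) = pinv x + pinv y.
  have [? ? _ _] := Ixy; apply: pinv_uniq => //.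
  by exists (x + y); apply: hull_inverse_sym.
rewrite /dom /ran pinv_xy !mulrDl !mulrDr x'y0 y'x0 xy'0 yx'0.
by split; rewrite // ?addr0 ?add0r.
Qed.

Lemma ran_mulr_hull u f : T u -> B f -> ran (u * f) = u * f * pinv u.
Proof.
move=> Tu Bf; rewrite /ran pinvM ?(pinv_hull Bf) //; last exact: completion_hull.
by rewrite mulrA mulr_idemK ?hull_idem.
Qed.

Lemma dom_mul x y : T x -> T y -> dom (x * y) = pinv y * dom x * y.
Proof. by move=> Tx Ty; rewrite /dom pinvM // !mulrA. Qed.

Definition cjoin a w := a + w * (1 - dom a).

Lemma cjoin_orth a w : T a -> T w -> agree a w ->
  dom a * dom (w * (1 - dom a)) = 0 /\ ran a * ran (w * (1 - dom a)) = 0.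
Proof.
move=> Ta Tw [_ rw_a]; have Bda := hull_dom Ta; have Bc := hull_compl Bda.
rewrite (dom_mulr_hull Tw Bc) (ran_mulr_hull Tw Bc); split.
  by rewrite mulrA (hullC Bda (hull_dom Tw)) -mulrA idem_mulr_compl ?mulr0 ?hull_idem.
by rewrite !mulrA -rw_a -(mulrA _ a) mulrBr mulr1 mul_dom // subrr mulr0 mul0r.
Qed.

Lemma completion_cjoin a w : T a -> T w -> agree a w ->
  [/\ T (cjoin a w), dom (cjoin a w) = dom a + dom w * (1 - dom a)
    & ran (cjoin a w) = ran a + w * (1 - dom a) * pinv w].
Proof.
move=> Ta Tw agree_aw; have Bc := hull_compl (hull_dom Ta).
have Twc : T (w * (1 - dom a)) by apply/completionM/completion_hull.
have [dorth rorth] := cjoin_orth Ta Tw agree_aw.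
have [Tj -> ->] := completion_add_orth Ta Twc dorth rorth.
by rewrite dom_mulr_hull ?ran_mulr_hull.
Qed.

Lemma le_cjoinl a w : T a -> T w -> agree a w -> natle T a (cjoin a w).
Proof.
move=> Ta Tw agree_aw; have [Tj _ _] := completion_cjoin Ta Tw agree_aw.
apply: (natle_hull (f := dom a)) => //; first exact: hull_dom.
by rewrite mulrDl mul_dom // -mulrA (idem_mull_compl (hull_idem (hull_dom Ta))) mulr0 addr0.
Qed.

Lemma le_cjoinr a w : T a -> T w -> agree a w -> natle T w (cjoin a w).
Proof.
move=> Ta Tw agree_aw; have [Tj _ _] := completion_cjoin Ta Tw agree_aw.
apply: (natle_hull (f := dom w)) => //; first exact: hull_dom.
have [a_dw _] := agree_aw; have Bda := hull_dom Ta; have Bdw := hull_dom Tw.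
rewrite /cjoin mulrDl a_dw -mulrA mulrBl mul1r (hullC Bda Bdw) mulrBr mulrA !mul_dom //.
by rewrite addrC subrK.
Qed.

Lemma agree_cjoin a w z : T a -> T w -> T z -> agree a w ->
  agree z a -> agree z w -> agree z (cjoin a w).
Proof.
move=> Ta Tw Tz agree_aw [za_d za_r] [zw_d zw_r].
have [_ dom_j ran_j] := completion_cjoin Ta Tw agree_aw.
have Bc := hull_compl (hull_dom Ta).
split.
  rewrite dom_j mulrDr za_d (mulrA z) zw_d -(mulrA w).
  by rewrite (hullC (hull_dom Tz) Bc) mulrA -mulrDl.
have shift : w * dom a * pinv w * z = ran z * w * dom a.
  rewrite -{1}(pinv_ran Tw) mulrA -mulrA zw_r mulrA.
  rewrite (hullC (hull_conjT Tw (hull_dom Ta)) (hull_ran Tz)) -mulrA.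
  by rewrite -(mulr_hull_shift Tw (hull_dom Ta)) mulrA.
rewrite ran_j mulrDl za_r /cjoin (mulrDr (ran z)); congr (_ + _).
by rewrite mulrBr mulr1 !mulrBl -/(ran w) zw_r shift mulrBr mulrA.
Qed.

Lemma cjoin_mull_le a w c u : T a -> T w -> T c -> agree a w ->
  natle T (c * a) u -> natle T (c * w) u -> natle T (c * cjoin a w) u.
Proof.
move=> Ta Tw Tc agree_aw le_ca le_cw; have [_ [Tu _]] := le_ca.
have Bda := hull_dom Ta; have Bdca := hull_dom (completionM Tc Ta).
have dca_da : dom (c * a) * dom a = dom (c * a).
  by rewrite dom_mul // -!mulrA -/(dom a) mul_dom.
apply: (natle_hull (f := dom (c * a) + dom (c * w) * (1 - dom a))) => //.
  exact: hull_add_disjoint Bdca (hull_dom (completionM Tc Tw)) Bda dca_da.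
rewrite /cjoin mulrDr {1}(natle_dom le_ca) (mulrA c w) {1}(natle_dom le_cw).
by rewrite (mulrDr u) (mulrA u).
Qed.

Lemma cjoin_mulr_le a w c u : T a -> T w -> T c -> agree a w ->
  natle T (a * c) u -> natle T (w * c) u -> natle T (cjoin a w * c) u.
Proof.
move=> Ta Tw Tc agree_aw le_ac le_wc; have [_ [Tu _]] := le_ac.
have Bda := hull_dom Ta; set g := pinv c * dom a * c.
have Bg : B g by exact: hull_conjVT.
have Bh := hull_dom (completionM Tw Tc).
have ac_g : a * c = u * g by rewrite {1}(natle_dom le_ac) dom_mul.
apply: (natle_hull (f := g + dom (w * c) - g * dom (w * c))) => //; first exact: hull_join.
rewrite /cjoin mulrDl ac_g -mulrA mulrBl mul1r mulrBr (mull_hull_shift Tc Bda) mulrA.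
rewrite {1 2}(natle_dom le_wc) -/g -(mulrA u) (hullC Bh Bg).
by rewrite mulrBr mulrDr addrA.
Qed.

Definition agreeing (A : seq R) := {in A, forall x, T x} /\ {in A &, forall x y, agree x y}.

Definition bigjoin (A : seq R) := foldr cjoin 0 A.

Lemma agreeing_behead a A : agreeing (a :: A) -> agreeing A.
Proof.
have sub : {subset A <= a :: A} by move=> x xA; rewrite inE xA orbT.
by case=> TA agreeA; split; [apply: sub_in1 TA | apply: sub_in2 agreeA].
Qed.

Lemma agree0 z : agree z 0.
Proof. by rewrite /agree /dom /ran !(mulr0, mul0r). Qed.

Lemma completion_agree_bigjoin A : agreeing A ->
  T (bigjoin A) /\ forall z, T z -> {in A, forall x, agree z x} -> agree z (bigjoin A).
Proof.
elim: A => [|a A IH] agreeA.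
  by split=> [|z _ _]; [apply/completion_hull/hull0 | apply: agree0].
have [TA agreeaA] := agreeA; have Ta := TA a (mem_head a A).
have [Tj agree_j] := IH (agreeing_behead agreeA).
have agree_aj : agree a (bigjoin A).
  by apply: agree_j => // x xA; apply: agreeaA; rewrite ?mem_head ?inE ?xA ?orbT.
split=> [|z Tz agree_z]; first by have [] := completion_cjoin Ta Tj agree_aj.
apply: agree_cjoin => //; first by apply: agree_z; rewrite mem_head.
by apply: agree_j => // x xA; apply: agree_z; rewrite inE xA orbT.
Qed.

Lemma agreeing_cons a A : agreeing (a :: A) ->
  [/\ agreeing A, T a, T (bigjoin A) & agree a (bigjoin A)].
Proof.
move=> agreeA; have [TA agreeaA] := agreeA; have agreeA' := agreeing_behead agreeA.
have [Tj agree_j] := completion_agree_bigjoin agreeA'.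
split=> //; first exact: TA (mem_head a A).
apply: agree_j => [|x xA]; first exact: TA (mem_head a A).
by apply: agreeaA; rewrite ?mem_head ?inE ?xA ?orbT.
Qed.

Lemma le_bigjoin A x : agreeing A -> x \in A -> natle T x (bigjoin A).
Proof.
elim: A => // a A IH /agreeing_cons [agreeA Ta Tj agree_aj].
rewrite inE => /predU1P [-> | xA]; first exact: le_cjoinl.
exact: natle_trans (IH agreeA xA) (le_cjoinr Ta Tj agree_aj).
Qed.

Lemma bigjoin_mull_le A c u : agreeing A -> T c -> T u ->
  {in A, forall x, natle T (c * x) u} -> natle T (c * bigjoin A) u.
Proof.
move=> + Tc Tu; elim: A => [|a A IH]; first by rewrite mulr0 => _ _; apply: natle0.
move=> /agreeing_cons [agreeA Ta Tj agree_aj] le_cA.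
apply: cjoin_mull_le => //; first by apply: le_cA; rewrite mem_head.
by apply: IH => // x xA; apply: le_cA; rewrite inE xA orbT.
Qed.

Lemma bigjoin_mulr_le A c u : agreeing A -> T c -> T u ->
  {in A, forall x, natle T (x * c) u} -> natle T (bigjoin A * c) u.
Proof.
move=> + Tc Tu; elim: A => [|a A IH]; first by rewrite mul0r => _ _; apply: natle0.
move=> /agreeing_cons [agreeA Ta Tj agree_aj] le_Ac.
apply: cjoin_mulr_le => //; first by apply: le_Ac; rewrite mem_head.
by apply: IH => // x xA; apply: le_Ac; rewrite inE xA orbT.
Qed.

Lemma finite_compatible_agreeing A : finite_compatible T A -> agreeing A.
Proof. by case=> TA compA; split=> // x y xA yA; apply: compatible_agree; auto. Qed.

Lemma bigjoin_lub A : agreeing A -> is_lub_in T T (fun x => x \in A) (bigjoin A).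
Proof.
move=> agreeA; have [Tj _] := completion_agree_bigjoin agreeA.
split=> //; split=> [x|u Tu le_Au]; first exact: le_bigjoin.
rewrite -[bigjoin A]mul1r; apply: bigjoin_mull_le (completion_hull hull1) Tu _ => //.
by move=> x /le_Au; rewrite mul1r.
Qed.

Lemma completion_compatible_joins : has_compatible_joins T.
Proof.
by move=> A /finite_compatible_agreeing agreeA; exists (bigjoin A); apply: bigjoin_lub.
Qed.

Lemma completion_mul_distributes_joins : mul_distributes_joins T.
Proof.
move=> A j c /finite_compatible_agreeing agreeA [Tj [le_Aj lub_j]] Tc.
have [Tbj [le_Abj lub_bj]] := bigjoin_lub agreeA.
have -> : j = bigjoin A by apply: natle_anti; [apply: lub_j | apply: lub_bj].
split; (split; first exact: completionM); split.
- by move=> _ [x xA ->]; apply/natle_mul2l/le_Abj.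
- by move=> u Tu le_u; apply: bigjoin_mull_le => // x xA; apply: le_u; exists x.
- by move=> _ [x xA ->]; apply/natle_mul2r/le_Abj.
- by move=> u Tu le_u; apply: bigjoin_mulr_le => // x xA; apply: le_u; exists x.
Qed.

Lemma idem_completionE e : idem T e <-> B e.
Proof.
split=> [[Te ee] | Be]; first exact: completion_idem_hull.
by split; [apply: completion_hull | apply: hull_idem].
Qed.

Lemma natle_hullE e f : B e -> B f -> natle T e f <-> e = f * e.
Proof.
move=> Be Bf; split=> [/natle_dom | fe]; last exact: natle_hull (completion_hull Bf) Be fe.
by rewrite /dom (pinv_hull Be) hull_idem.
Qed.

Lemma hull_meet_join e f : B e -> B f ->
  is_glb_in T (idem T) (fun x => x = e \/ x = f) (e * f) /\
  is_lub_in T (idem T) (fun x => x = e \/ x = f) (e + f - e * f).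
Proof.
move=> Be Bf; have ef := hullC Be Bf; have ee := hull_idem Be; have ff := hull_idem Bf.
have Bef := hullM Be Bf; have Bjef := hull_join Be Bf.
split; split; try exact/idem_completionE; split.
- by move=> x [->|->]; rewrite natle_hullE // mulrA; [rewrite ee | rewrite -ef mulr_idemK].
- move=> u /idem_completionE Bu le_u; rewrite natle_hullE //.
  have := le_u e (or_introl erefl); have := le_u f (or_intror erefl).
  by rewrite !natle_hullE // => fu eu; rewrite -mulrA -fu.
- move=> x [->|->]; rewrite natle_hullE // mulrBl mulrDl.
    by rewrite ee -mulrA -ef mulrA ee addrK.
  by rewrite -mulrA ff (addrC (e * f)) addrK.
- move=> u /idem_completionE Bu le_u; rewrite natle_hullE //.
  have := le_u e (or_introl erefl); have := le_u f (or_intror erefl).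
  by rewrite !natle_hullE // => uf ue; rewrite mulrBr mulrDr mulrA -ue -uf.
Qed.

Lemma completion_idempotents_boolean : idempotents_boolean T.
Proof.
exists (fun e f => e * f), (fun e f => e + f - e * f), (fun e => 1 - e), 0, 1 => /=.
have E_hull := idem_completionE; have B0 := hull0; have B1 := hull1.
split; first exact/E_hull.
split; first exact/E_hull.
split; first by move=> e /E_hull Be; rewrite !natle_hullE // mulr0 mul1r.
split; first by move=> e f /E_hull Be /E_hull Bf; apply: hull_meet_join.
split.
  move=> e f g /E_hull Be /E_hull Bf /E_hull Bg.
  rewrite mulrBr mulrDr; congr (_ + _ - _).
  by rewrite !mulrA -(mulrA e f e) -(hullC Be Bf) mulrA hull_idem.
move=> e /E_hull Be; split; first exact/E_hull/hull_compl.
by rewrite idem_mulr_compl ?hull_idem // subr0 addrC subrK.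
Qed.

End BooleanCompletion.

Theorem mainTheorem9 (R : pzRingType) (S : R -> Prop) :
  S 0 -> S 1 -> inverse_monoid S ->
  exists T : R -> Prop, (forall x, S x -> T x) /\ boolean_inverse_monoid T.
Proof.
move=> _ _ S_invmon; exists (completion S); split; first exact: completion_invmon.
split; first exact: completion_inverse_monoid.
split; first exact: completion_has_zero.
split; first exact: completion_compatible_joins.
split; first exact: completion_mul_distributes_joins.
exact: completion_idempotents_boolean.
Qed.
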